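(* For all integers $0 \leq k \leq n$, \[ [2]_q^k\,[k]_{q^2}!\,S_B[n,k] \;=\; \sum_{\ell=0}^{k} q^{k(k-2\ell)}\,B_{n,\ell}(q)\,{n-\ell \brack k-\ell}_{q^2}. \]
   Context: For $k\ge 1$, $[k]_q=1+q+\dots+q^{k-1}$, $[0]_q=0$, $[n]_q!=[1]_q[2]_q\cdots[n]_q$ (with $[0]_q!=1$), and ${n\brack k}_q=\frac{[n]_q!}{[k]_q![n-k]_q!}$ for $0\le k\le n$; $[k]_{q^2}!$ and ${\cdot \brack \cdot}_{q^2}$ denote these with $q$ replaced by $q^2$. The type B $q$-Stirling numbers of the second kind $S_B[n,k]$ are defined by $S_B[0,k]=\delta_{0k}$ and $S_B[n,k]=S_B[n-1,k-1]+[2k+1]_q\,S_B[n-1,k]$ for $n\ge1$ (with $S_B[n-1,-1]=0$). Let $\mathcal{B}_n$ be the group of signed permutations of $[n]$, i.e. bijections $\pi$ of $\{\pm1,\dots,\pm n\}$ with $\pi(-i)=-\pi(i)$, written $\pi=\pi_1\cdots\pi_n$ with $\pi_i=\pi(i)$, integers ordered naturally $-n<\dots<-1<0<1<\dots<n$. Set $\pi_0=0$; $\mathrm{Des}_B(\pi)=\{i\in\{0,1,\dots,n-1\}:\pi_i>\pi_{i+1}\}$, $\mathrm{des}_B(\pi)=|\mathrm{Des}_B(\pi)|$, $\mathrm{neg}(\pi)=|\{i\in[n]:\pi_i<0\}|$, and the flag-major index $\mathrm{fmaj}(\pi)=\sum_{i\in\mathrm{Des}_B(\pi)}2i+\mathrm{neg}(\pi)$.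 Define $B_{n,k}(q)$ by $\sum_{\pi\in\mathcal{B}_n}t^{\mathrm{des}_B(\pi)}q^{\mathrm{fmaj}(\pi)}=\sum_{k=0}^n B_{n,k}(q)t^k$. *)

From HB Require Import structures.
From mathcomp Require Import all_boot all_order all_algebra.
From mathcomp Require Import fingroup perm.
From mathcomp Require Export fraction.
Set Implicit Arguments. Unset Strict Implicit. Unset Printing Implicit Defensive.
Import Order.TTheory GRing.Theory Num.Theory.
Local Open Scope ring_scope.

Definition qint (R : nzRingType) (q : R) (k : nat) : R := \sum_(i < k) q ^+ i.

Definition qfact (R : nzRingType) (q : R) (n : nat) : R :=
  \prod_(i < n) qint q i.+1.

(* q-binomial [n brack k]_q = [n]_q! / ([k]_q! [n-k]_q!) (used for k <= n) *)
Definition qbinom (F : fieldType) (q : F) (n k : nat) : F :=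
  qfact q n / (qfact q k * qfact q (n - k)).

Fixpoint SB (R : nzRingType) (q : R) (n k : nat) : R :=
  match n with
  | 0 => if k == 0%N then 1 else 0
  | n'.+1 =>
      (match k with 0 => 0 | k'.+1 => SB q n' k' end) + qint q (2 * k).+1 * SB q n' k
  end.

(* Signed permutations of [n]: a pair (s, e) encodes pi with
   pi_i = (-1)^(e (i-1)) * (s (i-1) + 1) for i = 1..n (0-based ordinals). *)
Definition signed_perm (n : nat) : finType :=
  ({perm 'I_n} * {ffun 'I_n -> bool})%type.

(* pi_i as an integer, with pi_0 = 0 (and 0 out of range) *)
Definition spval (n : nat) (p : signed_perm n) (i : nat) : int :=
  match i with
  | 0 => 0
  | j.+1 =>
      match @insub nat (fun x => (x < n)%N) 'I_n j with
      | Some o => (if p.2 o then -1 else 1) * ((p.1 o : nat).+1)%:Z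
      | None => 0
      end
  end.

Definition desB_set (n : nat) (p : signed_perm n) : seq nat :=
  [seq i <- iota 0 n | spval p i.+1 < spval p i].

Definition desB (n : nat) (p : signed_perm n) : nat := size (desB_set p).

Definition negB (n : nat) (p : signed_perm n) : nat := #|[set i : 'I_n | p.2 i]|.

Definition fmaj (n : nat) (p : signed_perm n) : nat :=
  (\sum_(i <- desB_set p) 2 * i + negB p)%N.

Definition desfmaj_poly (R : nzRingType) (q : R) (n : nat) : {poly R} :=
  \sum_(p : signed_perm n) 'X ^+ desB p * (q ^+ fmaj p)%:P.

Definition Bnk (R : nzRingType) (q : R) (n k : nat) : R := (desfmaj_poly q n)`_k.

(* Multiply both sides by q^(k^2).  By the recurrence of S_B, the left side
   L(n,k) then satisfies
     L(n+1,k+1) = q^(2k+1) [2]_q [k+1]_(q^2) L(n,k) + [2k+3]_q L(n,k+1),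
   and so does the right side, by q-Pascal for the Gaussian binomials in q^2
   and the recurrence
     B(n+1,l) = [2l+1]_q B(n,l) + q^(2l-1) [2n-2l+3]_q B(n,l-1).
   The latter comes from inserting -(n+1) or n+1 into the window of a signed
   permutation of [n] with d descents: the 2d+1 insertions that keep d descents
   raise fmaj by 0, 1, ..., 2d, and the 2(n-d)+1 that create a new descent
   raise it by 2d+1, ..., 2n+1.  As the initial values agree, so do both sides. *)

From HB Require Import structures.
From mathcomp Require Import all_boot all_order all_algebra.
From mathcomp Require Import fraction fingroup perm.
From mathcomp Require Import ring zify.
Import Order.TTheory GRing.Theory Num.Theory.
Local Open Scope ring_scope.
Set Implicit Arguments. Unset Strict Implicit. Unset Printing Implicit Defensive.

(** * q-integers and Gaussian binomials *)

Section QInteger.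
Variable R : comNzRingType.
Implicit Types q : R.

Lemma qint0 q : qint q 0 = 0.
Proof. by rewrite /qint big_ord0. Qed.

Lemma qintS q n : qint q n.+1 = qint q n + q ^+ n.
Proof. by rewrite /qint big_ord_recr. Qed.

Lemma qint1 q : qint q 1 = 1.
Proof. by rewrite qintS qint0 add0r expr0. Qed.

Lemma qint2 q : qint q 2 = 1 + q.
Proof. by rewrite qintS qint1 expr1. Qed.

Lemma qintD q a b : qint q (a + b) = qint q a + q ^+ a * qint q b.
Proof.
elim: b => [|b IH]; first by rewrite addn0 qint0 mulr0 addr0.
by rewrite addnS !qintS IH exprD; ring.
Qed.

Lemma qfact0 q : qfact q 0 = 1.
Proof. by rewrite /qfact big_ord0. Qed.

Lemma qfactS q n : qfact q n.+1 = qfact q n * qint q n.+1.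
Proof. by rewrite /qfact big_ord_recr. Qed.

End QInteger.

Lemma rmorph_qint (R S : comNzRingType) (f : {rmorphism R -> S}) (q : R) n :
  f (qint q n) = qint (f q) n.
Proof. by rewrite rmorph_sum; apply: eq_bigr => i _; rewrite rmorphXn. Qed.

Section GaussianBinomial.
Variables (F : fieldType) (x : F).
Hypothesis qint_neq0 : forall i, qint x i.+1 != 0.

Lemma qfact_neq0 n : qfact x n != 0.
Proof.
elim: n => [|n IH]; first by rewrite qfact0 oner_neq0.
by rewrite qfactS mulf_neq0.
Qed.

(* [qbinom x N K] extended by 0 for K > N, so that Pascal's rule holds for all N, K. *)
Definition qbin N K := if (K <= N)%N then qbinom x N K else 0.

Lemma qbin_small N K : (N < K)%N -> qbin N K = 0.
Proof. by rewrite /qbin ltnNge => /negbTE ->. Qed.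

Lemma qbin0 N : qbin N 0 = 1.
Proof. by rewrite /qbin /qbinom qfact0 mul1r subn0 divff ?qfact_neq0. Qed.

Lemma mul_qbin_left N K : qint x K.+1 * qbin N K.+1 = qint x (N - K) * qbin N K.
Proof.
have [ltKN|leNK] := ltnP K N; last first.
  by rewrite qbin_small ?ltnS // (_ : N - K = 0)%N ?qint0 ?mulr0 ?mul0r //; lia.
rewrite /qbin ltKN ltnW // /qbinom qfactS (_ : N - K = (N - K.+1).+1)%N; last by lia.
rewrite qfactS; field.
by rewrite !qfact_neq0 !qint_neq0.
Qed.

Lemma mul_qbin_diag N K : qint x N.+1 * qbin N K = qint x K.+1 * qbin N.+1 K.+1.
Proof.
rewrite /qbin ltnS; case: leqP => [leKN|]; last by rewrite !mulr0.
by rewrite /qbinom subSS !qfactS; field; rewrite !qfact_neq0 !qint_neq0.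
Qed.

Lemma qbinS N K : qbin N.+1 K.+1 = qbin N K.+1 + x ^+ (N - K) * qbin N K.
Proof.
apply: (mulfI (qint_neq0 K)); rewrite -mul_qbin_diag mulrDr mul_qbin_left.
have [ltNK|leKN] := ltnP N K; first by rewrite qbin_small ?mulr0 ?addr0.
by rewrite (_ : N.+1 = N - K + K.+1)%N ?qintD; [ring | lia].
Qed.

End GaussianBinomial.

Lemma qint_frac (F : fieldType) (x : F) n : x != 1 -> qint x n = (1 - x ^+ n) / (1 - x).
Proof.
move=> x_neq1; have x1_neq0 : 1 - x != 0 by rewrite subr_eq0 eq_sym.
by rewrite -opprB subrX1 -/(qint x n); field.
Qed.

(** * The recurrence satisfied by both sides *)

Section StirlingIdentity.
Variables (F : fieldType) (q : F).
Hypothesis q_not_root1 : forall j, (0 < j)%N -> q ^+ j != 1.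

Lemma qint_sqr_neq0 i : qint (q ^+ 2) i.+1 != 0.
Proof.
apply/eqP => qint_eq0; have /negP := @q_not_root1 (2 * i.+1) isT; apply.
by rewrite exprM -subr_eq0 subrX1 -/(qint _ _) qint_eq0 mulr0.
Qed.

Local Notation G := (qbin (q ^+ 2)).

Lemma qbin_sqr0 N : G N 0 = 1.
Proof. exact: qbin0 qint_sqr_neq0 N. Qed.

(* The coefficient of [B (l + N) l] in the recurrence [B_sumS] below, for
   k = l + K and n = l + N. *)
Lemma B_sum_coef l K N b :
  q ^+ (2 * (l + K).+1 * K.+1) * (qint q (2 * l + 1) * b) * G N.+1 K.+1
  + q ^+ (2 * (l + K).+1 * K) * (q ^+ (2 * l + 1) * qint q (2 * N + 1) * b) * G N K
  = q ^+ (2 * (l + K) + 1) * (qint q 2 * qint (q ^+ 2) (l + K).+1)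
      * (q ^+ (2 * (l + K) * K) * b * G N K)
    + qint q (2 * (l + K) + 3) * (q ^+ (2 * (l + K).+1 * K.+1) * b * G N K.+1).
Proof.
have [ltNK|leKN] := ltnP N K.
  by rewrite !qbin_small ?ltnS // ?mulr0 ?addr0 //; lia.
have [M ->] : exists M, N = (K + M)%N by exists (N - K)%N; lia.
have qint_neq0 := qint_sqr_neq0.
have q_neq1 : q != 1 by rewrite -[q]expr1 q_not_root1.
have q2_neq1 : q ^+ 2 != 1 by rewrite q_not_root1.
have ratio : G (K + M) K.+1 = qint (q ^+ 2) M / qint (q ^+ 2) K.+1 * G (K + M) K.
  have := mul_qbin_left qint_neq0 (K + M) K; rewrite (_ : K + M - K = M)%N; last by lia.
  by move=> E; apply: (mulfI (qint_neq0 K)); rewrite E; field.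
rewrite qbinS // ratio (_ : K + M - K = M)%N; last by lia.
rewrite (_ : 2 * (l + K).+1 * K.+1 = 2 * (l + K) * K + (2 * K + (2 * (l + K)).+2))%N; last by lia.
rewrite (_ : 2 * (l + K).+1 * K = 2 * (l + K) * K + 2 * K)%N; last by lia.
(* With the quadratic exponent hidden in [P], all remaining exponents are linear
   and expand into powers of q ^+ l, q ^+ K and q ^+ M. *)
rewrite !exprD; set P := q ^+ (2 * (l + K) * K).
rewrite !qint_frac // -!exprM !(mulnDr, mulnS, addnS, addSn) !(exprS, exprD).
field; apply/and3P; split; rewrite subr_eq0 eq_sym ?q_neq1 //.
by rewrite -exprD -!exprS q_not_root1.
Qed.

Variable B : nat -> nat -> F.
Hypothesis B0 : forall l, B 0 l = (l == 0)%:R.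
Hypothesis BS : forall n l, B n.+1 l = qint q (2 * l + 1) * B n l
  + (if l is l'.+1 then q ^+ (2 * l' + 1) * qint q (2 * (n - l') + 1) * B n l' else 0).

Lemma B_small n l : (n < l)%N -> B n l = 0.
Proof.
elim: n l => [|n IH] [|l] // ltnl.
by rewrite BS !IH ?mulr0 ?addr0 //; lia.
Qed.

Definition SB_scaled n k := q ^+ (k * k) * (qint q 2 ^+ k * qfact (q ^+ 2) k * SB q n k).

Definition B_sum n k :=
  \sum_(l < k.+1) q ^+ (2 * k * (k - l)) * B n l * G (n - l) (k - l).

Lemma SB_scaledS n k : SB_scaled n.+1 k.+1 =
  q ^+ (2 * k + 1) * (qint q 2 * qint (q ^+ 2) k.+1) * SB_scaled n k
  + qint q (2 * k + 3) * SB_scaled n k.+1.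
Proof.
rewrite /SB_scaled /= (_ : (2 * k.+1).+1 = 2 * k + 3)%N; last by lia.
rewrite (_ : k.+1 * k.+1 = k * k + (2 * k + 1))%N; last by lia.
by rewrite qfactS exprS exprD; ring.
Qed.

Lemma B_sumS n k : B_sum n.+1 k.+1 =
  q ^+ (2 * k + 1) * (qint q 2 * qint (q ^+ 2) k.+1) * B_sum n k
  + qint q (2 * k + 3) * B_sum n k.+1.
Proof.
rewrite /B_sum; set c := q ^+ (2 * k + 1) * _; set d := qint q (2 * k + 3).
under eq_bigr do rewrite BS mulrDr mulrDl.
rewrite big_split /= [X in X + _ = _]big_ord_recr [X in _ + X = _]big_ord_recl /=.
rewrite mulr0 mul0r add0r [X in _ = _ + _ * X]big_ord_recr /= mulrDr.
rewrite (mulr_sumr _ _ _ c) (mulr_sumr _ _ _ d) addrAC -big_split /= addrA -big_split /=.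
congr (_ + _); last first.
  rewrite !subnn !muln0 !expr0 !qbin_sqr0 /d (_ : 2 * k.+1 + 1 = 2 * k + 3)%N; last by lia.
  by ring.
apply: eq_bigr => -[i ltik] _ /=; rewrite /bump leq0n add0n add1n /c /d.
have [ltni|lein] := ltnP n i; first by rewrite B_small //; ring.
have [K ->] : exists K, k = (i + K)%N by exists (k - i)%N; lia.
have [N ->] : exists N, n = (i + N)%N by exists (n - i)%N; lia.
rewrite !subSS !subSn ?leq_addr // !addKn.
exact: B_sum_coef.
Qed.

Lemma SB_scaled_B_sum n k : SB_scaled n k = B_sum n k.
Proof.
elim: n k => [|n IH] [|k].
- by rewrite /SB_scaled /B_sum big_ord1 B0 qbin_sqr0 /= qfact0 !mulr1.
- rewrite /SB_scaled /B_sum /= mulr0 mulr0 big_ord_recl qbin_small // mulr0 add0r.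
  by rewrite big1 // => i _; rewrite B0 mulr0 mul0r.
- move: (IH 0%N); rewrite /SB_scaled /B_sum !big_ord1 /= !subn0 !mul1r !qbin_sqr0 !mulr1 BS.
  by rewrite qfact0 !mul1r add0r addr0 => ->.
- by rewrite SB_scaledS B_sumS !IH.
Qed.

End StirlingIdentity.

(** * Inserting an extreme letter into a signed word *)

(* The sum of the (0-based) positions of the [true] entries of [b]. *)
Fixpoint maj (b : bitseq) : nat := if b is _ :: b' then (maj b' + count id b')%N else 0%N.

(* The descent bits after inserting, at position [j], a letter smaller ([s])
   or larger ([~~ s]) than all others; see [descents_ins]. *)
Fixpoint ins_des (j : nat) (s : bool) (b : bitseq) : bitseq :=
  match j, b with
  | 0, _ :: b' => s :: ~~ s :: b'
  | j'.+1, x :: b' => x :: ins_des j' s b'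
  | _, [::] => [:: s]
  end.

Section Weight.
Variable R : comNzRingType.
Implicit Types t q : R.

Definition weight t q (b : bitseq) := t ^+ count id b * q ^+ (2 * maj b).

Lemma weight_cons t q x b : weight t q (x :: b) = t ^+ x * weight (t * q ^+ 2) q b.
Proof. by rewrite /weight /= mulnDr exprD (exprD q) exprMn -exprM; ring. Qed.

Lemma weight_scale t q b : weight (t * q ^+ 2) q b = q ^+ (2 * count id b) * weight t q b.
Proof. by rewrite /weight exprMn -exprM mulnC; ring. Qed.

Lemma sum_weight_ins_des t q b :
  \sum_(j < (size b).+1) (q * weight t q (ins_des j true b) + weight t q (ins_des j false b))
  = weight t q b * (qint q (2 * count id b + 1)
      + t * q ^+ (2 * count id b + 1) * qint q (2 * (size b - count id b) + 1)).
Proof.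
elim: b t => [|x b IH] t; first by rewrite big_ord1 /weight /= !qint1; ring.
rewrite big_ord_recl /=.
under eq_bigr do rewrite add0n !weight_cons mulrCA -mulrDr.
rewrite -mulr_sumr IH !weight_cons !weight_scale /= !expr0 !expr1 !mul1r.
have := count_size id b.
set c := count id b; set m := size b; set W := weight t q b.
case: x => /= lecm; rewrite ?add0n.
  rewrite (_ : 2 * (1 + c) + 1 = (2 * c + 1) + 2)%N; last by lia.
  rewrite (_ : m.+1 - (1 + c) = m - c)%N; last by lia.
  by rewrite (qintD _ (2 * c + 1) 2) qint2 (exprD q _ 2) (exprD q _ 1); ring.
rewrite (_ : 2 * (m.+1 - c) + 1 = 2 + (2 * (m - c) + 1))%N; last by lia.
by rewrite (qintD _ 2) qint2 (exprD q _ 1); ring.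
Qed.

End Weight.

Definition ins (j : nat) (v : int) (w : seq int) : seq int := take j w ++ v :: drop j w.

Lemma count_ins (p : pred int) j v w : count p (ins j v w) = (p v + count p w)%N.
Proof. by rewrite /ins count_cat /= addnCA -count_cat cat_take_drop. Qed.

Lemma perm_ins j v w : perm_eq (ins j v w) (v :: w).
Proof. by rewrite /ins -cat1s perm_catCA cat_take_drop. Qed.

Lemma ins_nth j w : (j < size w)%N -> ins j (nth 0 w j) (take j w ++ drop j.+1 w) = w.
Proof.
move=> ltjw; have size_take_j : size (take j w) = j by rewrite size_take ltjw.
by rewrite /ins take_size_cat // drop_size_cat // -drop_nth // cat_take_drop.
Qed.

(* Entry i is the test w_(i+1) < w_i, with w_0 = 0: the bits of Des_B. *)
Definition descents (w : seq int) : bitseq := pairmap (fun x y => y < x) 0 w.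
Definition negw (w : seq int) : nat := count (fun x => x < 0) w.
Definition desw (w : seq int) : nat := count id (descents w).
Definition fmajw (w : seq int) : nat := (2 * maj (descents w) + negw w)%N.

Lemma size_descents w : size (descents w) = size w.
Proof. exact: size_pairmap. Qed.

Lemma pairmap_ins (v : int) (s : bool) j a w :
  (forall x, x \in a :: w -> (v < x) = s /\ (x < v) = ~~ s) ->
  pairmap (fun x y => y < x) a (ins j v w) = ins_des j s (pairmap (fun x y => y < x) a w).
Proof.
elim: w a j => [|x w IH] a [|j] vs /=; rewrite ?(proj1 (vs a (mem_head _ _))) //.
  by rewrite (proj2 (vs x _)) // !inE eqxx orbT.
by rewrite IH // => y wy; apply: vs; rewrite inE wy orbT.
Qed.

Lemma descents_ins N (s : bool) j w : (0 < N)%N -> {in w, forall x, (absz x < N)%N} ->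
  descents (ins j (if s then - N%:Z else N%:Z) w) = ins_des j s (descents w).
Proof.
move=> N_gt0 wN; apply: pairmap_ins => x; rewrite inE => /predU1P [->|/wN].
  by case: s; split; lia.
by case: s; split; lia.
Qed.

Lemma word_weight (R : comNzRingType) (t q : R) w :
  t ^+ desw w * q ^+ fmajw w = q ^+ negw w * weight t q (descents w).
Proof. by rewrite /weight /fmajw exprD; ring. Qed.

Lemma sum_ins_extremes (R : comNzRingType) (t q : R) N w :
  (0 < N)%N -> {in w, forall x, (absz x < N)%N} ->
  \sum_(j < (size w).+1)
    (t ^+ desw (ins j (- N%:Z) w) * q ^+ fmajw (ins j (- N%:Z) w)
     + t ^+ desw (ins j N%:Z w) * q ^+ fmajw (ins j N%:Z w))
  = t ^+ desw w * q ^+ fmajw w *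
    (qint q (2 * desw w + 1)
     + t * q ^+ (2 * desw w + 1) * qint q (2 * (size w - desw w) + 1)).
Proof.
move=> N_gt0 wN.
under eq_bigr => j _.
  rewrite !word_weight (descents_ins true) // (descents_ins false) // /negw !count_ins.
  have -> : (- N%:Z < 0) = true by lia.
  have -> : (N%:Z < 0) = false by lia.
  rewrite /= add1n add0n exprS -mulrA mulrCA -mulrDr.
  over.
by rewrite -mulr_sumr -size_descents sum_weight_ins_des word_weight size_descents mulrA.
Qed.

Lemma maj_filter_iota b m :
  (\sum_(i <- [seq i <- iota m (size b) | nth false b (i - m)]) i = maj b + m * count id b)%N.
Proof.
elim: b m => [|x b IH] m; first by rewrite big_nil muln0.
rewrite /= subnn (@eq_in_filter _ _ (fun i => nth false b (i - m.+1))); last first.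
  by move=> i; rewrite mem_iota => /andP [ltmi _]; rewrite (_ : i - m = (i - m.+1).+1)%N //; lia.
by case: x; rewrite ?big_cons IH /=; lia.
Qed.

Lemma maj_filter b : (\sum_(i <- [seq i <- iota 0 (size b) | nth false b i]) i)%N = maj b.
Proof.
rewrite -[RHS]addn0 -(mul0n (count id b)) -maj_filter_iota.
by congr (\sum_(i <- _) _); apply: eq_filter => i; rewrite subn0.
Qed.

Lemma descents_nth w :
  descents w = [seq nth 0 (0 :: w) i.+1 < nth 0 (0 :: w) i | i <- iota 0 (size w)].
Proof.
apply: (@eq_from_nth _ false); first by rewrite size_descents size_map size_iota.
move=> i; rewrite size_descents => ltiw.
by rewrite (nth_map 0%N) ?size_iota // nth_iota // (nth_pairmap 0).
Qed.

Section SignedWord.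
Variable n : nat.
Implicit Types p : signed_perm n.

Definition spletter p (i : 'I_n) : int := (if p.2 i then -1 else 1) * (p.1 i).+1%:Z.

Definition spword p : seq int := [seq spletter p i | i <- enum 'I_n].

Lemma size_spword p : size (spword p) = n.
Proof. by rewrite size_map size_enum_ord. Qed.

Lemma spval_nth p i : spval p i = nth 0 (0 :: spword p) i.
Proof.
case: i => [|i] //=; rewrite /spval.
case: insubP => [o ltin <-|geni].
  by rewrite (nth_map o) ?size_enum_ord ?ltn_ord // nth_ord_enum.
by rewrite nth_default // size_spword leqNgt.
Qed.

Lemma desB_set_spword p :
  desB_set p =
    [seq i <- iota 0 (size (descents (spword p))) | nth false (descents (spword p)) i].
Proof.
rewrite /desB_set size_descents size_spword; apply: eq_in_filter => i.
rewrite mem_iota add0n => /andP [_ ltin].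
by rewrite descents_nth (nth_map 0%N) ?size_iota ?size_spword // nth_iota // !spval_nth.
Qed.

Lemma desB_spword p : desB p = desw (spword p).
Proof.
rewrite /desB desB_set_spword size_filter /desw.
by rewrite -[in RHS](mkseq_nth false (descents _)) count_map.
Qed.

Lemma spletter_lt0 p i : (spletter p i < 0) = p.2 i.
Proof. by rewrite /spletter; case: (p.2 i); lia. Qed.

Lemma negB_spword p : negB p = negw (spword p).
Proof.
rewrite /negB /negw count_map cardsE cardE /enum_mem size_filter /enum_mem count_filter.
by apply: eq_count => i; rewrite /= !inE andbT spletter_lt0.
Qed.

Lemma fmaj_spword p : fmaj p = fmajw (spword p).
Proof. by rewrite /fmaj /fmajw negB_spword desB_set_spword -big_distrr maj_filter. Qed.

End SignedWord.

Definition ins_extremes (n : nat) : seq (nat * int) :=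
  [seq (j, v) | j <- iota 0 n, v <- [:: - n%:Z; n%:Z]].

(* The words of all signed permutations of [n], built by inserting -n or n at
   every position of the words for n - 1; see [perm_spwords]. *)
Fixpoint spwords (n : nat) : seq (seq int) :=
  if n is n'.+1 then [seq ins jv.1 jv.2 w | w <- spwords n', jv <- ins_extremes n]
  else [:: [::]].

Lemma spwordsS n :
  spwords n.+1 = [seq ins jv.1 jv.2 w | w <- spwords n, jv <- ins_extremes n.+1].
Proof. by []. Qed.

Lemma size_spwords n : size (spwords n) = (n`! * 2 ^ n)%N.
Proof.
elim: n => [|n IH] //.
by rewrite spwordsS size_allpairs IH size_allpairs size_iota factS expnS /=; lia.
Qed.

Definition signed_word n (w : seq int) := perm_eq (map absz w) (iota 1 n).

Lemma signed_word_spwords n w : signed_word n w -> w \in spwords n.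
Proof.
elim: n w => [|n IH] w sw.
  by move: (perm_size sw); rewrite size_map; case: w {sw}.
have size_w : size w = n.+1 by rewrite -(size_iota 1 n.+1) -(perm_size sw) size_map.
have [j ltjw wjE] : exists2 j, (j < size w)%N & absz (nth 0 w j) = n.+1.
  have : n.+1 \in map absz w by rewrite (perm_mem sw) mem_iota; lia.
  case/mapP=> x wx ->; exists (index x w); first by rewrite index_mem.
  by rewrite nth_index.
set w' := take j w ++ drop j.+1 w.
have w'E : w = ins j (nth 0 w j) w' by rewrite ins_nth.
have ww' : perm_eq (map absz w) (n.+1 :: map absz w').
  by rewrite w'E -wjE; exact: (perm_map absz (perm_ins j _ w')).
have sw' : signed_word n w'.
  rewrite /signed_word -(perm_cons n.+1).
  apply: perm_trans (perm_trans _ sw) _; first by rewrite perm_sym.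
  by rewrite -(addn1 n) iotaD add1n cats1 perm_rcons addn1.
rewrite spwordsS; apply/allpairsP; exists (w', (j, nth 0 w j)); split => //=; first exact: IH.
apply/allpairsP; exists (j, nth 0 w j) => /=; split => //.
  by rewrite inE mem_iota; lia.
have : nth 0 w j = - n.+1%:Z \/ nth 0 w j = n.+1%:Z by lia.
by rewrite !inE => -[->|->]; rewrite eqxx ?orbT.
Qed.

Lemma absz_spletter n (p : signed_perm n) i : absz (spletter p i) = (p.1 i).+1.
Proof. by rewrite /spletter; case: (p.2 i); rewrite ?mulN1r ?mul1r ?abszN. Qed.

Lemma signed_word_spword n (p : signed_perm n) : signed_word n (spword p).
Proof.
rewrite /signed_word /spword -map_comp (eq_map (absz_spletter p)).
rewrite (_ : iota 1 n = map S (map val (enum 'I_n))); last first.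
  by rewrite val_enum_ord -(iotaDl 1 0).
rewrite (_ : [seq _ | i <- _] = map S (map val (map p.1 (enum 'I_n)))); last first.
  by rewrite -!map_comp.
apply/perm_map/perm_map.
apply: uniq_perm; [by rewrite map_inj_uniq ?enum_uniq //; exact: perm_inj | exact: enum_uniq |].
by move=> i; rewrite mem_enum; apply/mapP; exists ((p.1)^-1 i)%g; rewrite ?mem_enum ?permKV.
Qed.

Lemma spword_inj n : injective (@spword n).
Proof.
move=> [s e] [s' e'] /eq_in_map same_letters.
have eq_letter i : spletter (s, e) i = spletter (s', e') i by apply: same_letters; rewrite mem_enum.
congr (_, _).
  apply/permP => i; apply/val_inj/succn_inj.
  by rewrite -(absz_spletter (s, e)) -(absz_spletter (s', e')) eq_letter.
by apply/ffunP => i; rewrite -[e i]/((s, e).2 i) -spletter_lt0 eq_letter spletter_lt0.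
Qed.

Lemma perm_spwords n : perm_eq (map (@spword n) (enum {: signed_perm n})) (spwords n).
Proof.
have uniq_img : uniq (map (@spword n) (enum {: signed_perm n})).
  by rewrite map_inj_uniq ?enum_uniq //; exact: spword_inj.
have sub_img : {subset map (@spword n) (enum {: signed_perm n}) <= spwords n}.
  by move=> w /mapP [p _ ->]; apply/signed_word_spwords/signed_word_spword.
have size_le : (size (spwords n) <= size (map (@spword n) (enum {: signed_perm n})))%N.
  by rewrite size_spwords size_map -cardE card_prod card_Sn card_ffun card_bool card_ord.
have [size_eq mem_eq] := uniq_min_size uniq_img sub_img size_le.
by apply: uniq_perm; rewrite // (uniq_size_uniq uniq_img mem_eq) size_eq.
Qed.

Lemma spwords_signed_word n w : w \in spwords n -> signed_word n w.
Proof. by rewrite -(perm_mem (perm_spwords n)) => /mapP [p _ ->]; apply: signed_word_spword. Qed.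

Lemma size_spwords_mem n w : w \in spwords n -> size w = n.
Proof. by move=> /spwords_signed_word /perm_size; rewrite size_map size_iota. Qed.

Lemma spwords_letter_lt n w : w \in spwords n -> {in w, forall x, (absz x < n.+1)%N}.
Proof.
move=> /spwords_signed_word sw x wx.
by move: (map_f absz wx); rewrite (perm_mem sw) mem_iota; lia.
Qed.

(** * The recurrence of B_{n,k}(q) *)

Lemma coef_XnC_lin (R : comNzRingType) d (c a b : R) l :
  ('X^d * c%:P * (a%:P + 'X * b%:P))`_l = (d == l)%:R * (c * a) + (d.+1 == l)%:R * (c * b).
Proof.
rewrite (_ : 'X ^+ d * c%:P * _ = (c * a)%:P * 'X ^+ d + (c * b)%:P * 'X ^+ d.+1); last first.
  by rewrite !polyCM exprS; ring.
by rewrite coefD !coefCM !coefXn ![(l == _)]eq_sym; ring.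
Qed.

Section DesFmaj.
Variables (R : comNzRingType) (q : R).

Lemma desfmaj_poly_spwords n :
  desfmaj_poly q n = \sum_(w <- spwords n) 'X^(desw w) * (q ^+ fmajw w)%:P.
Proof.
rewrite /desfmaj_poly -(perm_big _ (perm_spwords n)) big_map big_enum /=.
by apply: eq_bigr => p _; rewrite desB_spword fmaj_spword.
Qed.

Lemma desfmaj_polyS n : desfmaj_poly q n.+1 =
  \sum_(w <- spwords n) 'X^(desw w) * (q ^+ fmajw w)%:P *
    ((qint q (2 * desw w + 1))%:P
     + 'X * (q ^+ (2 * desw w + 1) * qint q (2 * (n - desw w) + 1))%:P).
Proof.
rewrite desfmaj_poly_spwords spwordsS big_allpairs_dep /=.
rewrite big_seq_cond [RHS]big_seq_cond; apply: eq_bigr => w /andP [ws _].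
rewrite /ins_extremes big_allpairs_dep.
under eq_bigr do rewrite big_cons big_seq1 /= !rmorphXn.
rewrite (_ : iota 0 n.+1 = index_iota 0 (size w).+1); last first.
  by rewrite /index_iota subn0 (size_spwords_mem ws).
rewrite big_mkord.
rewrite (sum_ins_extremes _ _ (ltn0Sn n) (spwords_letter_lt ws)) (size_spwords_mem ws).
by rewrite -!rmorph_qint -!rmorphXn polyCM; ring.
Qed.

Lemma Bnk_spwords n l : Bnk q n l = \sum_(w <- spwords n) (desw w == l)%:R * q ^+ fmajw w.
Proof.
rewrite /Bnk desfmaj_poly_spwords coef_sum; apply: eq_bigr => w _.
by rewrite coefMC coefXn eq_sym mulrC.
Qed.

Lemma Bnk0 l : Bnk q 0 l = (l == 0%N)%:R.
Proof. by rewrite Bnk_spwords big_seq1 /desw /fmajw /= mulr1 eq_sym. Qed.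

Lemma BnkS n l : Bnk q n.+1 l = qint q (2 * l + 1) * Bnk q n l
  + (if l is l'.+1 then q ^+ (2 * l' + 1) * qint q (2 * (n - l') + 1) * Bnk q n l' else 0).
Proof.
rewrite {1}/Bnk desfmaj_polyS coef_sum.
under eq_bigr do rewrite coef_XnC_lin.
rewrite big_split /= !Bnk_spwords mulr_sumr; congr (_ + _).
  by apply: eq_bigr => w _; case: eqP => [->|_] /=; ring.
case: l => [|l]; first by rewrite big1 // => w _; rewrite mul0r.
rewrite Bnk_spwords mulr_sumr; apply: eq_bigr => w _.
by rewrite eqSS; case: eqP => [->|_] /=; ring.
Qed.

End DesFmaj.

Theorem theorem1p1 (n k : nat) : (k <= n)%N ->
  let q : {fraction {poly int}} := tofrac 'X in
  qint q 2 ^+ k * qfact (q ^+ 2) k * SB q n k =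
  \sum_(l < k.+1)
     q ^ ((k%:Z) * (k%:Z - 2 * (l : nat)%:Z)) * Bnk q n l
       * qbinom (q ^+ 2) (n - l) (k - l).
Proof.
move=> lekn q.
have q_not_root1 j : (0 < j)%N -> q ^+ j != 1.
  move=> j_gt0; rewrite /q -tofracXn -tofrac1 tofrac_eq.
  by apply/eqP => Xj1; have := size_polyXn int j; rewrite Xj1 size_poly1; lia.
have q_neq0 : q != 0 by rewrite /q tofrac_eq0 polyX_eq0.
apply: (mulfI (expf_neq0 (k * k) q_neq0)).
have := SB_scaled_B_sum q_not_root1 (@Bnk0 _ q) (@BnkS _ q) n k.
rewrite /SB_scaled /B_sum => ->; rewrite mulr_sumr; apply: eq_bigr => -[l ltlk] _ /=.
rewrite /qbin (_ : k - l <= n - l)%N; last by lia.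
rewrite !mulrA; congr (_ * _ * _).
by rewrite !exprnP -expfzDr //; congr (_ ^ _ * _); nia.
Qed.
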